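(* Let $p\in(1,\infty)$. Define $F_p:\mathbb{C}\to\mathbb{C}$ by $F_p(z)=z\,|z|^{p-2}$ for $z\neq 0$ and $F_p(0)=0$. Let $\varphi_p:=\arcsin|1-\tfrac{2}{p}|$ and \[ \Sigma_p:=\{z\in\mathbb{C}\setminus\{0\}: |\arg z|\le \varphi_p\}\cup\{0\}. \] Then \[ \overline{\{(w-z)\cdot\overline{(F_p(w)-F_p(z))} : z,w\in\mathbb{C}\}}=\Sigma_p, \] where the bar over the set denotes the closure in $\mathbb{C}$ and the bar over $F_p(w)-F_p(z)$ denotes complex conjugation.
   Context: $\arg$ denotes the principal argument, with values in $(-\pi,\pi]$. *)

From Stdlib Require Import Reals.
From Coquelicot Require Import Coquelicot.
Open Scope R_scope.

(* Principal argument Arg z in (-PI, PI] for z <> 0 (value at 0 irrelevant). *)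
Definition Carg (z : C) : R :=
  if Rle_dec 0 (Im z) then acos (Re z / Cmod z) else - acos (Re z / Cmod z).

Definition Fp (p : R) (z : C) : C :=
  if Ceq_dec z 0%C then 0%C else Cmult z (RtoC (Rpower (Cmod z) (p - 2))).

Definition phi_p (p : R) : R := asin (Rabs (1 - 2 / p)).

Definition Sigma_p (p : R) (z : C) : Prop :=
  (z <> 0%C /\ Rabs (Carg z) <= phi_p p) \/ z = 0%C.

Definition Wp (p : R) (u : C) : Prop :=
  exists z w : C, u = Cmult (Cminus w z) (Cconj (Cminus (Fp p w) (Fp p z))).

Definition Cclosure (S : C -> Prop) (u : C) : Prop :=
  forall eps : R, 0 < eps -> exists s : C, S s /\ Cmod (Cminus s u) < eps.

From Stdlib Require Import Reals Lra Psatz.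
From Coquelicot Require Import Coquelicot.
Open Scope R_scope.

(* Since F_p(z) = |z|^(p-2) z, a point of W_p is u = (w - z) conj(a w - b z) with
   a = |w|^(p-2), b = |z|^(p-2). Writing X + iY = w conj z, its real and imaginary parts are
   a|w|^2 + b|z|^2 - (a+b) X and (a-b) Y, and X^2 + Y^2 = |w|^2 |z|^2. As
   cos phi_p = 2 sqrt(p-1) / p, the sector Sigma_p is 4(p-1) Im^2 <= (p-2)^2 Re^2, Re >= 0,
   and for u this reduces to the monotonicity of x |-> x^(p-1) and to the nonnegativity of
   g(x) = (p-2)^2 2cosh(px) - p^2 2cosh((p-2)x) + 8(p-1) at x = ln(|w|/|z|). This holds
   because g(0) = g'(0) = 0 and g'' >= 0, as |(p-2)x| <= |px|.
   Conversely, F_p is (p-1)-homogeneous, so W_p is invariant under positive dilations, and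
   for w = 1 + e(1 + it), z = 1 the points u/e^2 tend to (p-1+t^2, (p-2)t) as e -> 0; every
   nonzero point of the sector is a positive multiple of such a limit. *)

Lemma MVT_from_zero (f f' : R -> R) (y : R) :
  (forall x, is_derive f x (f' x)) -> f 0 = 0 -> y <> 0 ->
  exists c, 0 < c * y /\ f y = f' c * y.
Proof.
  intros Hd Hf0 Hy.
  assert (Hd' : forall c, derivable_pt_lim f c (f' c)) by (intros c; apply is_derive_Reals, Hd).
  destruct (Rtotal_order 0 y) as [Hlt | [Heq | Hgt]]; [| congruence |].
  - destruct (MVT_cor2 f f' 0 y Hlt (fun c _ => Hd' c)) as [c [Hc Hcy]].
    exists c. split; [nra | lra].
  - destruct (MVT_cor2 f f' y 0 Hgt (fun c _ => Hd' c)) as [c [Hc Hcy]].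
    exists c. split; [nra | lra].
Qed.

Lemma mul_id_nonneg_of_deriv_nonneg (f f' : R -> R) :
  (forall x, is_derive f x (f' x)) -> f 0 = 0 -> (forall x, 0 <= f' x) ->
  forall y, 0 <= f y * y.
Proof.
  intros Hd Hf0 Hf' y.
  destruct (Req_dec y 0) as [-> | Hy]; [lra |].
  destruct (MVT_from_zero f f' y Hd Hf0 Hy) as [c [_ ->]].
  specialize (Hf' c). nra.
Qed.

Lemma nonneg_of_deriv_mul_id_nonneg (f f' : R -> R) :
  (forall x, is_derive f x (f' x)) -> f 0 = 0 -> (forall x, 0 <= f' x * x) ->
  forall y, 0 <= f y.
Proof.
  intros Hd Hf0 Hf' y.
  destruct (Req_dec y 0) as [-> | Hy]; [lra |].
  destruct (MVT_from_zero f f' y Hd Hf0 Hy) as [c [Hcy ->]].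
  specialize (Hf' c). nra.
Qed.

Lemma exp_le_exp (x y : R) : x <= y -> exp x <= exp y.
Proof.
  intros [Hlt | ->]; [apply Rlt_le, exp_increasing, Hlt | apply Rle_refl].
Qed.

Lemma exp_sym_le (a b : R) : b ^ 2 <= a ^ 2 -> exp b + exp (- b) <= exp a + exp (- a).
Proof.
  intros Hab.
  assert (Hfac : exp a + exp (- a) - (exp b + exp (- b))
                 = (exp a - exp b) * (1 - exp (- (a + b)))).
  { rewrite Ropp_plus_distr, exp_plus, !exp_Ropp.
    field. split; apply Rgt_not_eq, exp_pos. }
  assert (Hsign : 0 <= (exp a - exp b) * (1 - exp (- (a + b)))).
  { destruct (Rtotal_order a b) as [Hlt | [-> | Hgt]].
    - assert (exp a <= exp b) by (apply exp_le_exp; lra).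
      assert (1 <= exp (- (a + b))) by (rewrite <- exp_0; apply exp_le_exp; nra).
      nra.
    - lra.
    - assert (exp b <= exp a) by (apply exp_le_exp; lra).
      assert (exp (- (a + b)) <= 1) by (rewrite <- exp_0; apply exp_le_exp; nra).
      nra. }
  lra.
Qed.

Definition defect (p x : R) : R :=
  (p - 2) ^ 2 * (exp (p * x) + exp (- (p * x)))
  - p ^ 2 * (exp ((p - 2) * x) + exp (- ((p - 2) * x))) + 8 * (p - 1).

Definition defect' (p x : R) : R :=
  p * (p - 2) ^ 2 * (exp (p * x) - exp (- (p * x)))
  - p ^ 2 * (p - 2) * (exp ((p - 2) * x) - exp (- ((p - 2) * x))).

Definition defect'' (p x : R) : R :=
  p ^ 2 * (p - 2) ^ 2 * (exp (p * x) + exp (- (p * x)) - (exp ((p - 2) * x) + exp (- ((p - 2) * x)))).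

Lemma is_derive_defect (p x : R) : is_derive (defect p) x (defect' p x).
Proof. unfold defect, defect'. auto_derive; [auto | ring]. Qed.

Lemma is_derive_defect' (p x : R) : is_derive (defect' p) x (defect'' p x).
Proof. unfold defect', defect''. auto_derive; [auto | ring]. Qed.

Lemma defect_nonneg (p x : R) : 1 < p -> 0 <= defect p x.
Proof.
  intros hp.
  apply (nonneg_of_deriv_mul_id_nonneg _ _ (is_derive_defect p)).
  { unfold defect. rewrite !Rmult_0_r, Ropp_0, exp_0. ring. }
  apply (mul_id_nonneg_of_deriv_nonneg _ _ (is_derive_defect' p)).
  { unfold defect'. rewrite !Rmult_0_r, Ropp_0, exp_0. ring. }
  intros y. unfold defect''.
  assert (Hsq : ((p - 2) * y) ^ 2 <= (p * y) ^ 2) by nra.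
  pose proof (exp_sym_le _ _ Hsq).
  assert (0 <= p ^ 2 * (p - 2) ^ 2) by (apply Rmult_le_pos; apply pow2_ge_0).
  nra.
Qed.

Lemma Rpower_pos (x y : R) : 0 < Rpower x y.
Proof. apply exp_pos. Qed.

Lemma Rpower_1_l (q : R) : Rpower 1 q = 1.
Proof. unfold Rpower. rewrite ln_1, Rmult_0_r. apply exp_0. Qed.

Lemma Rpower_mul_self (x q : R) : 0 < x -> Rpower x q * x = Rpower x (q + 1).
Proof. intros Hx. rewrite Rpower_plus, Rpower_1 by exact Hx. reflexivity. Qed.

Lemma Rpower_mul_sqr (x q : R) : 0 < x -> Rpower x q * x ^ 2 = Rpower x (q + 2).
Proof.
  intros Hx. rewrite Rpower_plus, <- (Rpower_pow 2 x Hx). do 2 f_equal.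
Qed.

Lemma exp_mul_ln_ratio (k x y : R) : 0 < x -> 0 < y ->
  exp (k * (ln x - ln y)) = Rpower x k / Rpower y k.
Proof.
  intros Hx Hy. unfold Rpower, Rdiv.
  rewrite <- exp_Ropp, <- exp_plus. f_equal. ring.
Qed.

Lemma weights_monotone (p R r : R) : 1 < p -> 0 <= R -> 0 <= r ->
  (Rpower R (p - 2) + Rpower r (p - 2)) * (R * r)
  <= Rpower R (p - 2) * R ^ 2 + Rpower r (p - 2) * r ^ 2.
Proof.
  intros hp HR Hr.
  pose proof (Rpower_pos R (p - 2)) as Ha. pose proof (Rpower_pos r (p - 2)) as Hb.
  destruct HR as [HR | <-]; [| nra].
  destruct Hr as [Hr | <-]; [| nra].
  assert (Hmono : forall x y, 0 < x <= y -> Rpower x (p - 2) * x <= Rpower y (p - 2) * y).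
  { intros x y Hxy. rewrite !Rpower_mul_self by lra. apply Rle_Rpower_l; lra. }
  assert (0 <= (R - r) * (Rpower R (p - 2) * R - Rpower r (p - 2) * r)).
  { destruct (Rle_dec R r).
    - pose proof (Hmono R r ltac:(lra)). nra.
    - pose proof (Hmono r R ltac:(lra)). nra. }
  nra.
Qed.

(* With [a = R^(p-2)], [b = r^(p-2)] and [x = ln (R/r)], the difference of the two
   sides is [a b (R r)^2 * defect p x]. *)
Lemma weights_gap (p R r : R) : 1 < p -> 0 <= R -> 0 <= r ->
  4 * (p - 1) * (Rpower R (p - 2) - Rpower r (p - 2)) ^ 2 * (R * r) ^ 2
  <= (p - 2) ^ 2 * ((Rpower R (p - 2) * R ^ 2 + Rpower r (p - 2) * r ^ 2) ^ 2
                    - ((Rpower R (p - 2) + Rpower r (p - 2)) * (R * r)) ^ 2).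
Proof.
  intros hp HR Hr.
  pose proof (Rpower_pos R (p - 2)) as Ha. pose proof (Rpower_pos r (p - 2)) as Hb.
  destruct HR as [HR | <-].
  2: { ring_simplify. pose proof (pow2_ge_0 ((p - 2) * Rpower r (p - 2) * r ^ 2)). nra. }
  destruct Hr as [Hr | <-].
  2: { ring_simplify. pose proof (pow2_ge_0 ((p - 2) * Rpower R (p - 2) * R ^ 2)). nra. }
  pose proof (defect_nonneg p (ln R - ln r) hp) as Hd. unfold defect in Hd.
  rewrite !exp_Ropp, !exp_mul_ln_ratio in Hd by assumption.
  assert (Ep : forall x, 0 < x -> Rpower x p = Rpower x (p - 2) * x ^ 2).
  { intros x Hx. rewrite Rpower_mul_sqr by exact Hx. f_equal. ring. }
  rewrite !Ep in Hd by assumption.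
  set (a := Rpower R (p - 2)) in *. set (b := Rpower r (p - 2)) in *.
  apply Rminus_le.
  match type of Hd with 0 <= ?D =>
    replace (_ - _) with (- (a * b * (R * r) ^ 2 * D)) by (field; lra) end.
  assert (0 <= a * b * (R * r) ^ 2) by (apply Rmult_le_pos; [nra | apply pow2_ge_0]).
  nra.
Qed.

Definition cone (p : R) (u : C) : Prop :=
  0 <= Re u /\ 4 * (p - 1) * Im u ^ 2 <= (p - 2) ^ 2 * Re u ^ 2.

Lemma cone_of_chord (p A B D M X Y : R) :
  0 <= B -> 0 <= M -> X ^ 2 + Y ^ 2 = M ^ 2 -> B * M <= A ->
  4 * (p - 1) * D ^ 2 * M ^ 2 <= (p - 2) ^ 2 * (A ^ 2 - (B * M) ^ 2) ->
  cone p (A - B * X, D * Y).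
Proof.
  intros HB HM HXY HBM Hgap. unfold cone, Re, Im; simpl.
  assert (HX : X <= M) by nra.
  assert (Hre : 0 <= A - B * X) by nra.
  split; [exact Hre |].
  destruct HM as [HM | <-].
  2: { assert (Y = 0) by nra. subst Y.
       apply Rle_trans with 0; [right; ring | apply Rmult_le_pos; apply pow2_ge_0]. }
  assert (Hid : (A - B * X) ^ 2 * M ^ 2 - (A ^ 2 - (B * M) ^ 2) * Y ^ 2 = (A * X - B * M ^ 2) ^ 2).
  { replace (Y ^ 2) with (M ^ 2 - X ^ 2) by lra. ring. }
  assert (H1 : (p - 2) ^ 2 * ((A ^ 2 - (B * M) ^ 2) * Y ^ 2) <= (p - 2) ^ 2 * ((A - B * X) ^ 2 * M ^ 2)).
  { apply Rmult_le_compat_l; [apply pow2_ge_0 |]. pose proof (pow2_ge_0 (A * X - B * M ^ 2)). lra. }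
  assert (H2 : 4 * (p - 1) * D ^ 2 * M ^ 2 * Y ^ 2 <= (p - 2) ^ 2 * (A ^ 2 - (B * M) ^ 2) * Y ^ 2)
    by (apply Rmult_le_compat_r; [apply pow2_ge_0 | exact Hgap]).
  apply Rmult_le_reg_r with (M ^ 2); [nra |].
  nra.
Qed.

Lemma Fp_eq (p : R) (z : C) : Fp p z = Cmult (RtoC (Rpower (Cmod z) (p - 2))) z.
Proof. unfold Fp. destruct (Ceq_dec z 0) as [-> | _]; ring. Qed.

Lemma Wp_expand (a b : R) (z w : C) :
  Cmult (Cminus w z) (Cconj (Cminus (Cmult (RtoC a) w) (Cmult (RtoC b) z)))
  = (a * Cmod w ^ 2 + b * Cmod z ^ 2 - (a + b) * Re (Cmult w (Cconj z)),
     (a - b) * Im (Cmult w (Cconj z))).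
Proof.
  rewrite !Cmod2_alt. destruct z as [z1 z2], w as [w1 w2].
  unfold Cminus, Cmult, Cconj, Cplus, Copp, RtoC, Re, Im; simpl.
  apply injective_projections; simpl; ring.
Qed.

Lemma Wp_cone (p : R) (u : C) : 1 < p -> Wp p u -> cone p u.
Proof.
  intros hp [z [w ->]].
  rewrite !Fp_eq, Wp_expand.
  assert (HR : 0 <= Cmod w) by apply sqrt_pos. assert (Hr : 0 <= Cmod z) by apply sqrt_pos.
  apply (cone_of_chord p _ _ _ (Cmod w * Cmod z)).
  - apply Rplus_le_le_0_compat; apply Rlt_le, Rpower_pos.
  - apply Rmult_le_pos; assumption.
  - rewrite <- Cmod2_alt, Cmod_mult, Cmod_conj. ring.
  - apply weights_monotone; assumption.
  - apply weights_gap; assumption.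
Qed.

Lemma one_sub_sqr_one_sub_two_div_pos (p : R) : 1 < p -> 0 < 1 - (1 - 2 / p)².
Proof.
  intros hp. assert (0 < 2 / p < 2).
  { split; [apply Rdiv_lt_0_compat; lra |].
    apply Rmult_lt_reg_r with p; [lra |]. field_simplify; lra. }
  unfold Rsqr. nra.
Qed.

Lemma phi_p_bounds (p : R) : 1 < p -> 0 <= phi_p p <= PI / 2.
Proof.
  intros hp. pose proof (one_sub_sqr_one_sub_two_div_pos p hp) as Hy.
  rewrite Rsqr_abs in Hy. unfold phi_p. set (y := Rabs (1 - 2 / p)) in *.
  assert (0 <= y < 1) by (split; [apply Rabs_pos | unfold Rsqr in Hy; nra]).
  pose proof (asin_bound y). split; [| lra].
  destruct (Rle_dec 0 (asin y)) as [| Hneg]; [assumption |].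
  pose proof (sin_lt_0_var (asin y)) as Hsin. rewrite sin_asin in Hsin by lra.
  pose proof PI_RGT_0. lra.
Qed.

Lemma cos_phi_p (p : R) : 1 < p -> cos (phi_p p) = sqrt (1 - (1 - 2 / p)²).
Proof.
  intros hp. pose proof (one_sub_sqr_one_sub_two_div_pos p hp) as Hy.
  rewrite Rsqr_abs in Hy. pose proof (Rabs_pos (1 - 2 / p)).
  unfold phi_p. rewrite cos_asin, <- Rsqr_abs; [reflexivity |].
  unfold Rsqr in Hy. split; nra.
Qed.

Lemma cos_phi_p_pos (p : R) : 1 < p -> 0 < cos (phi_p p).
Proof.
  intros hp. rewrite cos_phi_p by exact hp.
  apply sqrt_lt_R0, one_sub_sqr_one_sub_two_div_pos, hp.
Qed.

Lemma cos_phi_p_mul_sqr (p : R) : 1 < p -> (cos (phi_p p) * p) ^ 2 = 4 * (p - 1).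
Proof.
  intros hp. pose proof (one_sub_sqr_one_sub_two_div_pos p hp).
  rewrite Rpow_mult_distr, cos_phi_p, <- Rsqr_pow2, Rsqr_sqrt by (assumption || lra).
  unfold Rsqr. field. lra.
Qed.

Lemma cos_le_cos_iff (x y : R) : 0 <= x <= PI -> 0 <= y <= PI -> (x <= y <-> cos y <= cos x).
Proof.
  intros Hx Hy. split; intros H.
  - destruct (Req_dec x y) as [-> | Hne]; [lra |].
    apply Rlt_le, cos_decreasing_1; lra.
  - destruct (Rle_dec x y) as [| Hlt]; [assumption |].
    pose proof (cos_decreasing_1 y x ltac:(lra) ltac:(lra) ltac:(lra) ltac:(lra) ltac:(lra)). lra.
Qed.

Lemma Sigma_p_iff (p : R) (u : C) : 1 < p -> (Sigma_p p u <-> cos (phi_p p) * Cmod u <= Re u).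
Proof.
  intros hp. pose proof (phi_p_bounds p hp) as Hphi. pose proof PI_RGT_0 as Hpi.
  destruct (Ceq_dec u 0) as [-> | Hu].
  { rewrite Cmod_0. unfold Sigma_p. simpl. split; [intros _; lra | now right]. }
  assert (Hm : 0 < Cmod u) by (apply Cmod_gt_0, Hu).
  assert (Hx : -1 <= Re u / Cmod u <= 1).
  { pose proof (re_le_Cmod u) as Hre. apply Rabs_le_between in Hre.
    split; [apply Rmult_le_reg_r with (Cmod u) | apply Rmult_le_reg_r with (Cmod u)];
      try lra; field_simplify; lra. }
  assert (Harg : Rabs (Carg u) = acos (Re u / Cmod u)).
  { pose proof (acos_bound (Re u / Cmod u)). unfold Carg.
    destruct (Rle_dec 0 (Im u)); [| rewrite Rabs_Ropp]; apply Rabs_right; lra. }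
  unfold Sigma_p. rewrite Harg.
  rewrite (cos_le_cos_iff _ _ (acos_bound _)) by lra.
  rewrite cos_acos by exact Hx.
  split.
  - intros [[_ H] | H]; [| contradiction].
    apply Rmult_le_reg_r with (/ Cmod u); [apply Rinv_0_lt_compat, Hm |].
    rewrite Rmult_assoc, Rinv_r, Rmult_1_r by lra. exact H.
  - intros H. left. split; [exact Hu |].
    apply Rmult_le_reg_r with (Cmod u); [exact Hm |]. field_simplify; lra.
Qed.

Lemma Re_ge_mul_Cmod_iff_cone (c p : R) (u : C) :
  0 < c -> (c * p) ^ 2 = 4 * (p - 1) -> (c * Cmod u <= Re u <-> cone p u).
Proof.
  intros Hc Hcp. unfold cone. pose proof (Cmod2_alt u) as Hm2.
  assert (Hm : 0 <= Cmod u) by apply sqrt_pos.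
  assert (Hp : p <> 0) by (intros ->; nra).
  assert (Hscale : forall x y, (c * x) ^ 2 <= y ^ 2 <-> (c * p) ^ 2 * x ^ 2 <= p ^ 2 * y ^ 2).
  { intros x y. rewrite !Rpow_mult_distr.
    assert (0 < p ^ 2) by (apply pow2_gt_0, Hp). split; intros Hxy.
    - rewrite (Rmult_comm (c ^ 2)), Rmult_assoc. apply Rmult_le_compat_l; lra.
    - apply Rmult_le_reg_l with (p ^ 2); lra. }
  split.
  - intros H. assert (0 <= Re u) by nra. split; [assumption |].
    assert (Hsq : (c * Cmod u) ^ 2 <= Re u ^ 2)
      by (apply pow_incr; split; [apply Rmult_le_pos; lra | exact H]).
    apply Hscale in Hsq. rewrite Hcp, Hm2 in Hsq. lra.
  - intros [H1 H2].
    assert (Hsq : (c * Cmod u) ^ 2 <= Re u ^ 2) by (apply Hscale; rewrite Hcp, Hm2; lra).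
    assert (0 <= c * Cmod u) by (apply Rmult_le_pos; lra).
    nra.
Qed.

Lemma Cmod_le_Rabs_sum (x y : R) : Cmod (x, y) <= Rabs x + Rabs y.
Proof.
  pose proof (Rabs_pos x). pose proof (Rabs_pos y).
  unfold Cmod; cbn [fst snd]. rewrite <- (sqrt_pow2 (Rabs x + Rabs y)) by lra.
  apply sqrt_le_1_alt. rewrite <- (pow2_abs x), <- (pow2_abs y). nra.
Qed.

Lemma Cclosure_self (S : C -> Prop) (u : C) : S u -> Cclosure S u.
Proof.
  intros Hu eps He. exists u. split; [exact Hu |].
  replace (Cminus u u) with (RtoC 0) by ring. rewrite Cmod_0. exact He.
Qed.

Lemma Cclosure_Re_ge_mul_Cmod (S : C -> Prop) (c : R) (u : C) : 0 <= c ->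
  (forall s, S s -> c * Cmod s <= Re s) -> Cclosure S u -> c * Cmod u <= Re u.
Proof.
  intros Hc HS Hu.
  destruct (Rle_dec (c * Cmod u) (Re u)) as [| Hlt]; [assumption | exfalso].
  destruct (Hu ((c * Cmod u - Re u) / (1 + c))) as [s [Hs Hsu]].
  { apply Rdiv_lt_0_compat; lra. }
  pose proof (HS s Hs) as Hcs.
  pose proof (re_le_Cmod (Cminus s u)) as Hre.
  replace (Re (Cminus s u)) with (Re s - Re u) in Hre by (destruct s, u; unfold Re, Cminus, Cplus, Copp; simpl; ring).
  pose proof (Cmod_triangle s (Cminus u s)) as Htri.
  replace (Cplus s (Cminus u s)) with u in Htri by ring.
  rewrite <- (Cmod_opp (Cminus u s)) in Htri. replace (Copp (Cminus u s)) with (Cminus s u) in Htri by ring.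
  apply Rabs_le_between in Hre.
  assert (c * Cmod u <= c * Cmod s + c * Cmod (Cminus s u))
    by (rewrite <- Rmult_plus_distr_l; apply Rmult_le_compat_l; lra).
  apply (Rmult_lt_compat_r (1 + c)) in Hsu; [| lra].
  unfold Rdiv in Hsu. rewrite Rmult_assoc, Rinv_l, Rmult_1_r in Hsu by lra.
  nra.
Qed.

Definition cone_dir (p t : R) : C := (p - 1 + t ^ 2, (p - 2) * t).

Lemma cone_scaled_dir (p : R) (u : C) : 1 < p -> cone p u -> u <> 0%C ->
  exists t lam, 0 < lam /\ u = Cmult (RtoC lam) (cone_dir p t).
Proof.
  intros hp [H1 H2] Hu. destruct u as [u1 u2]. unfold Re, Im in *; cbn [fst snd] in *.
  assert (Hu1 : 0 < u1).
  { destruct H1 as [| <-]; [assumption | exfalso].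
    replace ((p - 2) ^ 2 * 0 ^ 2) with 0 in H2 by ring.
    assert (u2 = 0) as -> by (apply Rsqr_0_uniq; unfold Rsqr; nra).
    apply Hu. reflexivity. }
  assert (Hsol : exists t, u2 * (p - 1 + t ^ 2) = u1 * (p - 2) * t).
  { destruct (Req_dec u2 0) as [-> | Hu2]; [exists 0; ring |].
    set (S := sqrt ((p - 2) ^ 2 * u1 ^ 2 - 4 * (p - 1) * u2 ^ 2)).
    assert (HS : S ^ 2 = (p - 2) ^ 2 * u1 ^ 2 - 4 * (p - 1) * u2 ^ 2)
      by (unfold S; rewrite <- Rsqr_pow2, Rsqr_sqrt; lra).
    set (t := ((p - 2) * u1 + S) / (2 * u2)).
    assert (Ht : 2 * u2 * t = (p - 2) * u1 + S) by (unfold t; field; assumption).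
    exists t. apply Rmult_eq_reg_l with (4 * u2); [| lra].
    replace (4 * u2 * (u2 * (p - 1 + t ^ 2))) with (4 * (p - 1) * u2 ^ 2 + (2 * u2 * t) ^ 2) by ring.
    replace (4 * u2 * (u1 * (p - 2) * t)) with (2 * (p - 2) * u1 * (2 * u2 * t)) by ring.
    rewrite Ht. nra. }
  destruct Hsol as [t Ht].
  assert (Hd : 0 < p - 1 + t ^ 2) by (pose proof (pow2_ge_0 t); lra).
  exists t, (u1 / (p - 1 + t ^ 2)). split; [apply Rdiv_lt_0_compat; assumption |].
  unfold cone_dir, Cmult, RtoC; cbn [fst snd].
  apply injective_projections; cbn [fst snd].
  - field. lra.
  - apply Rmult_eq_reg_r with (p - 1 + t ^ 2); [| lra].
    rewrite Ht. field. lra.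
Qed.

Lemma Fp_scale (p k : R) (z : C) : 0 < k ->
  Fp p (Cmult (RtoC k) z) = Cmult (RtoC (Rpower k (p - 1))) (Fp p z).
Proof.
  intros Hk. rewrite !Fp_eq.
  destruct (Ceq_dec z 0) as [-> | Hz]; [ring |].
  assert (Hm : 0 < Cmod z) by (apply Cmod_gt_0, Hz).
  rewrite Cmod_mult, Cmod_R, Rabs_right, <- Rpower_mult_distr by lra.
  replace (p - 1) with (p - 2 + 1) by ring.
  rewrite <- Rpower_mul_self by exact Hk.
  rewrite !RtoC_mult. ring.
Qed.

Lemma Cconj_RtoC (x : R) : Cconj (RtoC x) = RtoC x.
Proof. apply injective_projections; simpl; ring. Qed.

Lemma Wp_scale (p lam : R) (u : C) : 1 < p -> 0 < lam -> Wp p u -> Wp p (Cmult (RtoC lam) u).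
Proof.
  intros hp Hlam [z [w ->]].
  set (k := Rpower lam (/ p)).
  assert (Hk : 0 < k) by apply Rpower_pos.
  assert (Hlam_k : lam = k * Rpower k (p - 1)).
  { rewrite Rmult_comm, Rpower_mul_self by exact Hk. unfold k.
    rewrite Rpower_mult. replace (/ p * (p - 1 + 1)) with 1 by (field; lra).
    symmetry. apply Rpower_1, Hlam. }
  exists (Cmult (RtoC k) z), (Cmult (RtoC k) w).
  rewrite !Fp_scale, Hlam_k, RtoC_mult by exact Hk.
  rewrite !Cminus_conj, !Cmult_conj, !Cconj_RtoC. ring.
Qed.

Lemma Cclosure_scale (S : C -> Prop) (lam : R) (u : C) : 0 < lam ->
  (forall v, S v -> S (Cmult (RtoC lam) v)) -> Cclosure S u -> Cclosure S (Cmult (RtoC lam) u).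
Proof.
  intros Hlam HS Hu eps He.
  destruct (Hu (eps / lam)) as [s [Hs Hsu]]; [apply Rdiv_lt_0_compat; assumption |].
  exists (Cmult (RtoC lam) s). split; [apply HS, Hs |].
  replace (Cminus (Cmult (RtoC lam) s) (Cmult (RtoC lam) u)) with (Cmult (RtoC lam) (Cminus s u))
    by ring.
  rewrite Cmod_mult, Cmod_R, Rabs_right by lra.
  apply (Rmult_lt_compat_l lam) in Hsu; [| assumption].
  replace (lam * (eps / lam)) with eps in Hsu by (field; lra). exact Hsu.
Qed.

Lemma locally'_pos (P : R -> Prop) : locally' 0 P -> exists e, 0 < e /\ P e.
Proof.
  intros [d Hd]. exists (d / 2). pose proof (cond_pos d).
  split; [lra |]. apply Hd; [| lra].
  change (Rabs (d / 2 - 0) < d). rewrite Rminus_0_r, Rabs_right; lra.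
Qed.

Lemma Cclosure_of_is_lim (S : C -> Prop) (f g : R -> R) (l1 l2 : R) :
  (forall e, 0 < e -> S (f e, g e)) -> is_lim f 0 l1 -> is_lim g 0 l2 -> Cclosure S (l1, l2).
Proof.
  intros HS Hf Hg eps He.
  apply is_lim_spec in Hf, Hg.
  set (eps2 := mkposreal (eps / 2) ltac:(lra)).
  destruct (locally'_pos _ (filter_and _ _ (Hf eps2) (Hg eps2))) as [e [He0 [H1 H2]]].
  exists (f e, g e). split; [apply HS, He0 |].
  replace (Cminus (f e, g e) (l1, l2)) with ((f e - l1, g e - l2) : C)
    by (apply injective_projections; simpl; ring).
  eapply Rle_lt_trans; [apply Cmod_le_Rabs_sum |]. simpl in H1, H2. lra.
Qed.

Lemma is_lim_diff_quot (f : R -> R) (x l : R) :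
  is_derive f x l -> is_lim (fun h => (f (x + h) - f x) / h) 0 l.
Proof.
  intros Hd. apply is_lim_spec. intros eps.
  apply is_derive_Reals in Hd. destruct (Hd eps (cond_pos eps)) as [d Hdl].
  exists d. intros h Hh Hh0. apply Hdl; [exact Hh0 |].
  change (Rabs (h - 0) < d) in Hh. rewrite Rminus_0_r in Hh. exact Hh.
Qed.

Lemma is_derive_Rpower_Cmod_line (q t : R) :
  is_derive (fun e => Rpower (Cmod (1 + e, e * t)) q) 0 q.
Proof.
  unfold Rpower, Cmod. cbn [fst snd]. auto_derive;
  replace ((1 + 0) * ((1 + 0) * 1) + 0 * t * (0 * t * 1)) with 1 by ring; rewrite sqrt_1.
  - repeat split; lra.
  - rewrite ln_1, Rmult_0_r, exp_0. field.
Qed.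

Lemma cone_dir_in_Cclosure_Wp (p t : R) : 1 < p -> Cclosure (Wp p) (cone_dir p t).
Proof.
  intros hp.
  set (N := fun e => Rpower (Cmod (1 + e, e * t)) (p - 2)).
  set (Q := fun e => (N e - 1) / e).
  assert (HQ : is_lim Q 0 (p - 2)).
  { apply (is_lim_ext (fun h => (N (0 + h) - N 0) / h)).
    - intros h. unfold Q. rewrite Rplus_0_l. unfold N at 2.
      replace ((1 + 0, 0 * t) : C) with (RtoC 1) by (apply injective_projections; simpl; ring).
      rewrite Cmod_1, Rpower_1_l. reflexivity.
    - apply is_lim_diff_quot, is_derive_Rpower_Cmod_line. }
  apply (Cclosure_of_is_lim _ (fun e => Q e + (1 + e * Q e) * (1 + t ^ 2)) (fun e => t * Q e)).
  - intros e He.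
    set (w := (1 + e, e * t) : C).
    replace (_, _) with (Cmult (RtoC (/ e ^ 2)) (Cmult (Cminus w 1) (Cconj (Cminus (Fp p w) (Fp p 1))))).
    { apply Wp_scale; [exact hp | apply Rinv_0_lt_compat; nra | exists 1%C, w; reflexivity]. }
    rewrite !Fp_eq, Cmod_1, Rpower_1_l.
    unfold Q, N, w, Cminus, Cmult, Cconj, Cplus, Copp, RtoC; cbn [fst snd].
    apply injective_projections; cbn [fst snd]; field; lra.
  - replace (p - 1 + t ^ 2) with (p - 2 + (1 + 0 * (p - 2)) * (1 + t ^ 2)) by ring.
    apply is_lim_plus'; [exact HQ |].
    apply (is_lim_scal_r (fun e => 1 + e * Q e) (1 + t ^ 2) 0 (1 + 0 * (p - 2))).
    apply is_lim_plus'; [apply is_lim_const |].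
    apply (is_lim_mult (fun e => e) Q 0 0 (p - 2)); [apply is_lim_id | exact HQ | exact I].
  - rewrite Rmult_comm. apply (is_lim_scal_l Q t 0 (p - 2)), HQ.
Qed.

Lemma cone_in_Cclosure_Wp (p : R) (u : C) : 1 < p -> cone p u -> Cclosure (Wp p) u.
Proof.
  intros hp Hu. destruct (Ceq_dec u 0) as [-> | Hu0].
  - apply Cclosure_self. exists 0%C, 0%C. ring.
  - destruct (cone_scaled_dir p u hp Hu Hu0) as [t [lam [Hlam ->]]].
    apply Cclosure_scale; [exact Hlam | | apply cone_dir_in_Cclosure_Wp, hp].
    intros v. apply Wp_scale; assumption.
Qed.

Theorem lemma2 (p : R) (hp : 1 < p) :
  forall u : C, Cclosure (Wp p) u <-> Sigma_p p u.
Proof.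
  intros u.
  assert (Hcone : forall v, cos (phi_p p) * Cmod v <= Re v <-> cone p v)
    by (intros v; apply Re_ge_mul_Cmod_iff_cone; [apply cos_phi_p_pos | apply cos_phi_p_mul_sqr]; exact hp).
  rewrite Sigma_p_iff, Hcone by exact hp. split.
  - intros Hu. apply Hcone, (Cclosure_Re_ge_mul_Cmod (Wp p)); [apply Rlt_le, cos_phi_p_pos, hp | | exact Hu].
    intros s Hs. apply Hcone, Wp_cone; assumption.
  - apply cone_in_Cclosure_Wp, hp.
Qed.
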